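(* Let $\alpha\le N$ and $0<\sigma<N$. There exists $C=C(\Omega,\Sigma,\alpha,\sigma)>0$ such that $$\mathcal N_{\alpha,\sigma}^{-1}(x,y)\le C\big(\mathcal N_{\alpha,\sigma}^{-1}(x,z)+\mathcal N_{\alpha,\sigma}^{-1}(z,y)\big)$$ for all pairwise distinct $x,y,z\in\overline\Omega$.
   Context: $\Omega\subset\mathbb R^N$ ($N\ge3$) is a bounded $C^2$ domain, $\Sigma\subset\partial\Omega$ a compact $C^2$ submanifold without boundary of dimension $k\in\{0,\dots,N-1\}$, $d=\mathrm{dist}(\cdot,\partial\Omega)$, $d_\Sigma=\mathrm{dist}(\cdot,\Sigma)$. For $x,y\in\overline\Omega$, $x\ne y$: $$\mathcal N_{\alpha,\sigma}(x,y):=\frac{\max\{|x-y|,d_\Sigma(x),d_\Sigma(y)\}^\alpha}{|x-y|^{N-\sigma}\max\{|x-y|,d(x),d(y)\}^\sigma},$$ and $\mathcal N^{-1}_{\alpha,\sigma}=1/\mathcal N_{\alpha,\sigma}$. *)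

From HB Require Import structures.
From mathcomp Require Import all_boot all_order all_algebra.
From mathcomp Require Import all_classical all_reals all_analysis.
Set Implicit Arguments. Unset Strict Implicit. Unset Printing Implicit Defensive.
Import Order.TTheory GRing.Theory Num.Theory.
Import numFieldNormedType.Exports.
Local Open Scope classical_set_scope.
Local Open Scope ring_scope.

Section Defs.
Variable R : realType.

Definition enorm (n : nat) (x : 'rV[R]_n) : R := Num.sqrt (\sum_(i < n) x 0 i ^+ 2).

Definition dist_set (n : nat) (A : set 'rV[R]_n) (x : 'rV[R]_n) : R :=
  inf [set enorm (x - a) | a in A].

Definition bdry (n : nat) (A : set 'rV[R]_n) : set 'rV[R]_n :=
  closure A `\` interior A.

Definition ebasis (m : nat) (i : 'I_m) : 'rV[R]_m := delta_mx 0 i.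
Definition partial (m : nat) (i : 'I_m) (f : 'rV[R]_m -> R) : 'rV[R]_m -> R :=
  fun x => derive f x (ebasis i).

Definition C2fun (m : nat) (f : 'rV[R]_m -> R) : Prop :=
  continuous f /\
  (forall i x, derivable f x (ebasis i)) /\
  (forall i, continuous (partial i f)) /\
  (forall i j x, derivable (partial i f) x (ebasis j)) /\
  (forall i j, continuous (partial j (partial i f))).

(* last coordinate y_N of y in R^N (N > 0) *)
Definition lastcoord (N : nat) (y : 'rV[R]_N) : R :=
  \sum_(i < N | (i : nat) == N.-1) y 0 i.

Definition orthogonal_mx (n : nat) (Q : 'M[R]_n) : Prop := Q *m Q^T = 1%:M.

(* bounded C^2 domain of R^N: nonempty, open, connected, bounded, and locally
   (after a rigid motion) the region above the graph of a C^2 function *)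
Definition C2_domain (N : nat) (Omega : set 'rV[R]_N) : Prop :=
  Omega !=set0 /\ open Omega /\ connected Omega /\ bounded_set Omega /\
  forall x0, bdry Omega x0 ->
    exists (r : R) (Q : 'M[R]_N) (phi : 'rV[R]_N.-1 -> R),
      0 < r /\ orthogonal_mx Q /\ C2fun phi /\
      forall x, enorm (x - x0) < r ->
        (Omega x <->
          let y := (x - x0) *m Q in
          phi (\row_(i < N.-1) y 0 (widen_ord (leq_pred N) i)) < lastcoord y).

(* compact C^2 submanifold (without boundary) of R^N of dimension k (k < N):
   nonempty, compact, and locally the zero set of a C^2 submersion
   F : R^N -> R^(N-k) (Jacobian of rank N-k at the point) *)
Definition C2_submanifold (N k : nat) (S : set 'rV[R]_N) : Prop :=
  forall p, S p ->
    exists (r : R) (F : 'rV[R]_N -> 'rV[R]_(N - k)),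
      0 < r /\ (forall j, C2fun (fun x => F x 0 j)) /\
      \rank (\matrix_(i < N, j < N - k) partial i (fun x => F x 0 j) p) = (N - k)%N /\
      forall x, enorm (x - p) < r -> (S x <-> F x = 0).

Definition compact_C2_submanifold (N k : nat) (S : set 'rV[R]_N) : Prop :=
  S !=set0 /\ compact S /\ C2_submanifold k S.

Definition Nker (N : nat) (Omega Sigma : set 'rV[R]_N) (alpha sigma : R)
    (x y : 'rV[R]_N) : R :=
  let dO := dist_set (bdry Omega) in
  let dS := dist_set Sigma in
  let e := enorm (x - y) in
  (Num.max e (Num.max (dS x) (dS y))) `^ alpha /
  (e `^ (N%:R - sigma) * (Num.max e (Num.max (dO x) (dO y))) `^ sigma).

Definition Nker_inv (N : nat) (Omega Sigma : set 'rV[R]_N) (alpha sigma : R)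
    (x y : 'rV[R]_N) : R := (Nker Omega Sigma alpha sigma x y)^-1.

End Defs.

From HB Require Import structures.
From mathcomp Require Import all_boot all_order all_algebra.
From mathcomp Require Import all_classical all_reals all_analysis.
From mathcomp Require Import ring lra.
Import Order.TTheory GRing.Theory Num.Theory.
Import numFieldNormedType.Exports.
Set Implicit Arguments.
Unset Strict Implicit.
Unset Printing Implicit Defensive.

Local Open Scope classical_set_scope.
Local Open Scope ring_scope.

(* By symmetry of the kernel and the triangle inequality we may assume
   |x - y| <= 2 |x - z|, and then bound N^{-1}(x,y) by a constant times
   N^{-1}(x,z).  Both d and d_Sigma are 1-Lipschitz, so every maximum
   max{|x - y|, d(x), d(y)} lies between max{|x - y|, d(x)} and twice it; hence
   the three scales of the kernel at (x,y) are at most 4 times those at (x,z).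
   This controls the factors |x - y|^(N - sigma) and max^sigma, and also
   max_Sigma^(-alpha) when alpha < 0 or d_Sigma(x) >= |x - z|.  In the remaining
   case (alpha >= 0, d_Sigma(x) < |x - z|) every scale at (x,z) is comparable to
   |x - z|, while d <= d_Sigma (because Sigma lies in the boundary) gives
   N^{-1}(x,y) <= |x - y|^(N - sigma) max_Sigma^(sigma - alpha), which is
   O(|x - z|^(N - alpha)) since alpha <= N.  The comparisons are carried out on
   logarithms. *)

Section EuclideanNorm.
Variables (R : realType) (n : nat).
Implicit Types (u v : 'I_n -> R) (x y z : 'rV[R]_n).

(* Lagrange's identity: the defect is a sum of squares (u_i v_j - u_j v_i)^2. *)
Lemma CauchySchwarz_sum u v :
  (\sum_i u i * v i) ^+ 2 <= (\sum_i u i ^+ 2) * (\sum_i v i ^+ 2).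
Proof.
have lagrange : \sum_i \sum_j (u i * v j - u j * v i) ^+ 2 =
    \sum_i (u i ^+ 2 * \sum_j v j ^+ 2 + v i ^+ 2 * \sum_j u j ^+ 2
            - 2 * (u i * v i) * \sum_j u j * v j).
  apply: eq_bigr => i _; rewrite !mulr_sumr -big_split -sumrB /=.
  by apply: eq_bigr => j _; ring.
have : 0 <= \sum_i \sum_j (u i * v j - u j * v i) ^+ 2.
  by do 2![apply: sumr_ge0 => ? _]; exact: sqr_ge0.
rewrite lagrange sumrB big_split /= -!mulr_suml -mulr_sumr; lra.
Qed.

Lemma enorm_ge0 x : 0 <= enorm x.
Proof. exact: sqrtr_ge0. Qed.

Lemma enorm_gt0 x : (0 < enorm x) = (x != 0).
Proof.
rewrite sqrtr_gt0 lt_def sumr_ge0 => [|i _]; last exact: sqr_ge0.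
rewrite andbT; congr negb; rewrite psumr_eq0 => [|i _]; last exact: sqr_ge0.
apply/allP/eqP => [x0|-> i _]; last by rewrite mxE sqrf_eq0 eqxx.
apply/rowP => i; apply/eqP; rewrite mxE -sqrf_eq0; exact: x0 (mem_index_enum i).
Qed.

Lemma enormN x : enorm (- x) = enorm x.
Proof. by congr Num.sqrt; apply: eq_bigr => i _; rewrite mxE sqrrN. Qed.

Lemma enorm_distC x y : enorm (x - y) = enorm (y - x).
Proof. by rewrite -enormN opprB. Qed.

Lemma enormD x y : enorm (x + y) <= enorm x + enorm y.
Proof.
rewrite /enorm; set X := \sum_i x 0 i ^+ 2; set Y := \sum_i y 0 i ^+ 2.
have X0 : 0 <= X by apply: sumr_ge0 => i _; exact: sqr_ge0.
have Y0 : 0 <= Y by apply: sumr_ge0 => i _; exact: sqr_ge0.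
have expand : \sum_i (x + y) 0 i ^+ 2 = X + 2 * \sum_i x 0 i * y 0 i + Y.
  rewrite mulr_sumr -!big_split /=; apply: eq_bigr => i _; rewrite mxE; ring.
have CS : \sum_i x 0 i * y 0 i <= Num.sqrt X * Num.sqrt Y.
  rewrite -sqrtrM //; apply: le_trans (ler_norm _) _.
  rewrite -sqrtr_sqr; apply: ler_wsqrtr; exact: CauchySchwarz_sum.
rewrite -[leRHS]ger0_norm ?addr_ge0 ?sqrtr_ge0 // -sqrtr_sqr; apply: ler_wsqrtr.
rewrite expand sqrrD !sqr_sqrtr //; lra.
Qed.

Lemma enorm_distD x y z : enorm (x - y) <= enorm (x - z) + enorm (z - y).
Proof. by have := enormD (x - z) (z - y); rewrite addrA subrK. Qed.

End EuclideanNorm.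

Section DistSet.
Variables (R : realType) (n : nat).
Implicit Types (A B : set 'rV[R]_n) (x y : 'rV[R]_n).

Lemma dist_set_lbound A x : has_lbound [set enorm (x - a) | a in A].
Proof. by exists 0 => _ [a _ <-]; exact: enorm_ge0. Qed.

Lemma dist_set_lipschitz A x y :
  A !=set0 -> dist_set A y <= dist_set A x + enorm (x - y).
Proof.
move=> [a0 Aa0]; rewrite -lerBlDr; apply: lb_le_inf; first by exists (enorm (x - a0)), a0.
move=> _ [a Aa <-]; rewrite lerBlDr.
apply: le_trans (ge_inf (dist_set_lbound A y) (ex_intro2 _ _ a Aa erefl)) _.
by rewrite [leRHS]addrC (enorm_distC x y) enorm_distD.
Qed.

Lemma dist_setS A B x : A `<=` B -> A !=set0 -> dist_set B x <= dist_set A x.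
Proof.
move=> AB [a0 Aa0]; apply: lb_le_inf; first by exists (enorm (x - a0)), a0.
move=> _ [a Aa <-].
by have := ge_inf (dist_set_lbound B x) (ex_intro2 _ _ a (AB _ Aa) erefl).
Qed.

End DistSet.

Section MaxDist.
Variables (R : realType) (n : nat).
Implicit Types (d : 'rV[R]_n -> R) (x y z : 'rV[R]_n).

Definition max_dist d x y := Num.max (enorm (x - y)) (Num.max (d x) (d y)).

Lemma le_max_dist d d' x y :
  (forall x, d x <= d' x) -> max_dist d x y <= max_dist d' x y.
Proof. by move=> dd'; rewrite /max_dist le_max2 ?lexx ?le_max2. Qed.

Lemma max_dist_ge d x y : Num.max (enorm (x - y)) (d x) <= max_dist d x y.
Proof. by rewrite le_max2 ?lexx // le_max lexx. Qed.

Lemma max_dist_gt0 d x y : x != y -> 0 < max_dist d x y.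
Proof.
rewrite -subr_eq0 -enorm_gt0 => xy.
by apply: lt_le_trans (max_dist_ge d x y); rewrite lt_max xy.
Qed.

Section Lipschitz.
Variable d : 'rV[R]_n -> R.
Hypothesis d_lipschitz : forall x y, d y <= d x + enorm (x - y).

Lemma max_dist_le x y : max_dist d x y <= 2 * Num.max (enorm (x - y)) (d x).
Proof.
set m := Num.max _ _; have := d_lipschitz x y; have := enorm_ge0 (x - y).
have me : enorm (x - y) <= m by rewrite le_max lexx.
have md : d x <= m by rewrite le_max lexx orbT.
by rewrite /max_dist !ge_max => e0 lip; apply/and3P; split; lra.
Qed.

Lemma max_dist_near x y z :
  enorm (x - y) <= 2 * enorm (x - z) -> max_dist d x y <= 4 * max_dist d x z.
Proof.
move=> yz; apply: le_trans (max_dist_le x y) _.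
have := max_dist_ge d x z; have := enorm_ge0 (x - z); move: yz.
set e := enorm (x - y); set a := enorm (x - z); set M := max_dist d x z.
rewrite ge_max => yz a0 /andP[aM dM].
suff : Num.max e (d x) <= 2 * M by lra.
by rewrite ge_max; apply/andP; split; lra.
Qed.

End Lipschitz.
End MaxDist.

Lemma ln_le_lnM (R : realType) (c x y : R) :
  0 < c -> 0 < x -> 0 < y -> x <= c * y -> ln x <= ln c + ln y.
Proof. by move=> c0 x0 y0; rewrite -lnM ?posrE // ler_ln ?posrE ?mulr_gt0. Qed.

Lemma ln4 (R : realType) : ln (4 : R) = 2 * ln 2.
Proof. by rewrite (_ : 4 = 2 * 2) ?lnM ?posrE //; ring. Qed.

Section LogKernel.
Variables (R : realType) (n s al : R).
Hypotheses (s_gt0 : 0 < s) (s_lt_n : s < n) (al_le_n : al <= n).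

Definition lnNker_inv (e M A : R) := (n - s) * ln e + s * ln M - al * ln A.

Let K := n + s + 2 * `|al|.

Lemma lnNker_inv_le_comparable (e M A e' M' A' : R) :
  0 < e -> 0 < M -> 0 < A -> 0 < e' -> 0 < M' -> 0 < A' ->
  e <= 2 * e' -> M <= 4 * M' ->
  (0 <= al -> A' <= 2 * A) -> (al < 0 -> A <= 4 * A') ->
  lnNker_inv e M A <= K * ln 2 + lnNker_inv e' M' A'.
Proof.
move=> e0 M0 A0 e'0 M'0 A'0 ee' MM' A'_le_A A_le_A'.
have L0 : 0 < ln (2 : R) by rewrite ln_gt0 // ltr1n.
have Te : (n - s) * ln e <= (n - s) * (ln 2 + ln e').
  by apply: ler_wpM2l; [rewrite subr_ge0 ltW | apply: ln_le_lnM].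
have TM : s * ln M <= s * (2 * ln 2 + ln M').
  by apply: ler_wpM2l; [exact: ltW | rewrite -ln4; apply: ln_le_lnM].
have TA : - (al * ln A) <= - (al * ln A') + 2 * `|al| * ln 2.
  have [al0 | al0] := leP 0 al.
  - have lnA' : ln A' <= ln 2 + ln A by apply: ln_le_lnM => //; exact: A'_le_A.
    have : al * ln A' <= al * (ln 2 + ln A) by apply: ler_wpM2l.
    have := mulr_ge0 al0 (ltW L0); rewrite ger0_norm //; lra.
  - have lnA : ln A <= 2 * ln 2 + ln A' by rewrite -ln4; apply: ln_le_lnM => //; exact: A_le_A'.
    have : - al * ln A <= - al * (2 * ln 2 + ln A').
      by apply: ler_wpM2l; rewrite // oppr_ge0 ltW.
    rewrite ltr0_norm //; lra.
rewrite /lnNker_inv /K; lra.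
Qed.

Lemma lnNker_inv_le_far (e M A a M' A' : R) : 0 <= al ->
  0 < e -> 0 < M -> 0 < a -> 0 < A' ->
  e <= 2 * a -> M <= A -> e <= A -> A <= 4 * a -> a <= M' -> A' <= 2 * a ->
  lnNker_inv e M A <= K * ln 2 + lnNker_inv a M' A'.
Proof.
move=> al0 e0 M0 a0 A'0 ea MA eA Aa aM' A'a.
have A0 := lt_le_trans e0 eA; have M'0 := lt_le_trans a0 aM'.
have L0 : 0 < ln (2 : R) by rewrite ln_gt0 // ltr1n.
have lnea : ln e <= ln 2 + ln a by apply: ln_le_lnM.
have lnAa : ln A <= 2 * ln 2 + ln a by rewrite -ln4; apply: ln_le_lnM.
have lneA : ln e <= ln A by rewrite ler_ln ?posrE.
have TM : s * ln M <= s * ln A by apply: ler_wpM2l; [exact: ltW | rewrite ler_ln ?posrE].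
have TM' : s * ln a <= s * ln M' by apply: ler_wpM2l; [exact: ltW | rewrite ler_ln ?posrE].
have TA' : al * ln A' <= al * (ln 2 + ln a) by apply: ler_wpM2l => //; apply: ln_le_lnM.
have Te : (n - s) * ln e <= (n - s) * (ln 2 + ln a).
  by apply: ler_wpM2l; rewrite // subr_ge0 ltW.
have := mulr_ge0 al0 (ltW L0); have := mulr_gt0 s_gt0 L0.
rewrite /lnNker_inv /K ger0_norm //.
have [als | sal] := leP al s.
- have : (s - al) * ln A <= (s - al) * (2 * ln 2 + ln a).
    by apply: ler_wpM2l; rewrite ?subr_ge0.
  lra.
- have : (s - al) * ln A <= (s - al) * ln e.
    by apply: ler_wnM2l; rewrite // subr_le0 ltW.
  have : (n - al) * ln e <= (n - al) * (ln 2 + ln a).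
    by apply: ler_wpM2l; rewrite // subr_ge0.
  lra.
Qed.

End LogKernel.

Section Kernel.
Variables (R : realType) (n : nat) (Om Sg : set 'rV[R]_n) (al s : R).

Let dO := dist_set (bdry Om).
Let dS := dist_set Sg.

Lemma Nker_invE x y : x != y ->
  Nker_inv Om Sg al s x y =
  expR (lnNker_inv n%:R s al (enorm (x - y)) (max_dist dO x y) (max_dist dS x y)).
Proof.
move=> xy; have e0 : 0 < enorm (x - y) by rewrite enorm_gt0 subr_eq0.
rewrite /Nker_inv /Nker /= /powR !gt_eqF ?(max_dist_gt0 _ xy) //.
by rewrite -expRD invf_div -expRB.
Qed.

Lemma Nker_invC x y : Nker_inv Om Sg al s x y = Nker_inv Om Sg al s y x.
Proof. by rewrite /Nker_inv /Nker /= enorm_distC !(maxC (dist_set _ x)). Qed.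

Lemma Nker_inv_ge0 x y : 0 <= Nker_inv Om Sg al s x y.
Proof. by rewrite invr_ge0 divr_ge0 ?mulr_ge0 ?powR_ge0. Qed.

Hypotheses (Sg0 : Sg !=set0) (SgOm : Sg `<=` bdry Om).
Hypotheses (al_le_n : al <= n%:R) (s_gt0 : 0 < s) (s_lt_n : s < n%:R).

Let K := n%:R + s + 2 * `|al|.

Let dO_lipschitz x y : dO y <= dO x + enorm (x - y).
Proof. by apply: dist_set_lipschitz; case: Sg0 => p Sp; exists p; exact: SgOm. Qed.

Let dS_lipschitz x y : dS y <= dS x + enorm (x - y).
Proof. exact: dist_set_lipschitz. Qed.

Lemma Nker_inv_near x y z : x != y -> x != z ->
  enorm (x - y) <= 2 * enorm (x - z) ->
  Nker_inv Om Sg al s x y <= expR (K * ln 2) * Nker_inv Om Sg al s x z.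
Proof.
move=> xy xz yz; rewrite !Nker_invE // -expRD ler_expR.
have e0 : 0 < enorm (x - y) by rewrite enorm_gt0 subr_eq0.
have a0 : 0 < enorm (x - z) by rewrite enorm_gt0 subr_eq0.
have M0 := max_dist_gt0 dO xy; have A0 := max_dist_gt0 dS xy.
have M'0 := max_dist_gt0 dO xz; have A'0 := max_dist_gt0 dS xz.
have S_le_A : dS x <= max_dist dS x y.
  by apply: le_trans (max_dist_ge dS x y); rewrite le_max lexx orbT.
have A'_le := max_dist_le dS_lipschitz x z.
have [aS | Sa] := leP (enorm (x - z)) (dS x).
  apply: lnNker_inv_le_comparable => // [|_|_].
  - exact: max_dist_near.
  - by rewrite (max_r aS) in A'_le; apply: le_trans A'_le _; rewrite ler_pM2l.
  - exact: max_dist_near.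
have [al0 | al0] := ltP al 0.
  apply: lnNker_inv_le_comparable => // [||_]; last exact: max_dist_near.
  - exact: max_dist_near.
  - by rewrite leNgt al0.
apply: lnNker_inv_le_far => //.
- by apply: le_max_dist => w; apply: dist_setS.
- by apply: le_trans (max_dist_ge dS x y); rewrite le_max lexx.
- apply: le_trans (max_dist_le dS_lipschitz x y) _.
  suff : Num.max (enorm (x - y)) (dS x) <= 2 * enorm (x - z) by lra.
  rewrite ge_max yz /=; lra.
- by apply: le_trans (max_dist_ge dO x z); rewrite le_max lexx.
- by rewrite (max_l (ltW Sa)) in A'_le.
Qed.

Lemma Nker_inv_quasi_triangle x y z : x != y -> y != z -> x != z ->
  Nker_inv Om Sg al s x y <=
  expR (K * ln 2) * (Nker_inv Om Sg al s x z + Nker_inv Om Sg al s z y).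
Proof.
move=> xy yz xz; have C0 := expR_ge0 (K * ln 2).
have [near_z | far_z] := leP (enorm (x - y)) (2 * enorm (x - z)).
  apply: le_trans (Nker_inv_near xy xz near_z) _.
  by rewrite ler_wpM2l // lerDl Nker_inv_ge0.
have near_y : enorm (y - x) <= 2 * enorm (y - z).
  have := enorm_distD x y z; rewrite (enorm_distC y x) (enorm_distC y z); lra.
rewrite Nker_invC (Nker_invC z y) (addrC (Nker_inv _ _ _ _ x z)).
apply: le_trans (Nker_inv_near _ yz near_y) _; first by rewrite eq_sym.
by rewrite ler_wpM2l // lerDl Nker_inv_ge0.
Qed.

End Kernel.

Theorem lemma5p2 (R : realType) (N k : nat) (Omega Sigma : set 'rV[R]_N)
  (alpha sigma : R) :
  (3 <= N)%N -> C2_domain Omega ->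
  (k < N)%N -> compact_C2_submanifold k Sigma -> Sigma `<=` bdry Omega ->
  alpha <= N%:R -> 0 < sigma -> sigma < N%:R ->
  exists C : R, 0 < C /\
    forall x y z : 'rV[R]_N,
      closure Omega x -> closure Omega y -> closure Omega z ->
      x != y -> y != z -> x != z ->
      Nker_inv Omega Sigma alpha sigma x y <=
        C * (Nker_inv Omega Sigma alpha sigma x z + Nker_inv Omega Sigma alpha sigma z y).
Proof.
move=> _ _ _ [Sigma0 _] SigmaOmega alpha_le sigma_gt0 sigma_lt.
exists (expR ((N%:R + sigma + 2 * `|alpha|) * ln 2)); split; first exact: expR_gt0.
move=> x y z _ _ _; exact: Nker_inv_quasi_triangle.
Qed.
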